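(* Let $p$ be a prime and $a,b,c\ge0$ integers with $a,b\le p-1$ and $c\le a+b$. Then every root of $f(a,b,c)$ in $\overline{\mathbb{F}}_p\setminus\{0,1\}$ is a simple root.
   Context: For non-negative integers $a,b,c$, $f(a,b,c)\in\overline{\mathbb{F}}_p[t]$ is $f(a,b,c)=\sum_{i_2+i_3=c}\binom{a}{i_2}\binom{b}{i_3}t^{i_2}$ (binomial coefficients reduced mod $p$, $\binom{n}{i}=0$ for $i<0$ or $i>n$). *)

From HB Require Import structures.
From mathcomp Require Import all_boot all_order all_algebra.
Set Implicit Arguments. Unset Strict Implicit. Unset Printing Implicit Defensive.
Import GRing.Theory.
Local Open Scope ring_scope.

(* Indexing by i2 in [0,c], i3 = c - i2; 'C(n,i) = 0 for i > n. *)
Definition fpoly (K : nzRingType) (a b c : nat) : {poly K} :=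
  \sum_(i2 < c.+1) ('C(a, i2) * 'C(b, c - i2))%:R *: 'X^i2.

Definition simple_root (K : idomainType) (q : {poly K}) (x : K) : bool :=
  root q x && ~~ (('X - x%:P) ^+ 2 %| q).

(* If x <> 0, 1 were a multiple root of F = f(a,b,c), write F = G (t - x)^(k+2)
   with G(x) <> 0.  F is annihilated by a hypergeometric differential operator
   whose leading coefficient t(1 - t) does not vanish at x; the lowest-order
   term of that operator applied to G (t - x)^(k+2) is
   x(1 - x) G(x) (k+2)(k+1) (t - x)^k, so (k+2)(k+1) = 0 in the field.  This is
   impossible in characteristic p, since k + 2 <= deg F <= a < p. *)
From HB Require Import structures.
From mathcomp Require Import all_boot all_order all_algebra.
From mathcomp Require Import ring zify.
Set Implicit Arguments.
Unset Strict Implicit.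
Unset Printing Implicit Defensive.
Import GRing.Theory.
Local Open Scope ring_scope.

Section FpolyCoefficients.
Variables (R : nzRingType) (a b c : nat).

Lemma coef_fpoly i :
  (fpoly R a b c)`_i = if (i <= c)%N then ('C(a, i) * 'C(b, c - i))%:R else 0.
Proof.
rewrite /fpoly coef_sumMXn; case: leqP => [le_ic | lt_ci].
  rewrite (bigD1 (Ordinal (le_ic : (i < c.+1)%N))) //= big1 ?addr0 //.
  by move=> j /andP[/eqP eq_ji /eqP neq_ji]; case: neq_ji; apply: val_inj.
by rewrite big1 // => j /eqP eq_ji; move: (ltn_ord j); rewrite eq_ji ltnS leqNgt lt_ci.
Qed.

Lemma size_fpoly : (size (fpoly R a b c) <= a.+1)%N.
Proof.
by apply/leq_sizeP => j lt_aj; rewrite coef_fpoly (bin_small lt_aj) mul0n; case: ifP.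
Qed.

End FpolyCoefficients.

Lemma natr_mul_bin_left (R : pzRingType) n m :
  m.+1%:R * 'C(n, m.+1)%:R = (n%:R - m%:R) * 'C(n, m)%:R :> R.
Proof.
have [le_mn | lt_nm] := leqP m n; first by rewrite -natrB // -!natrM mul_bin_left.
by rewrite !bin_small ?mulr0 // ltnW.
Qed.

Lemma coef_fpoly_rec (R : comNzRingType) a b c i :
  let u k := (fpoly R a b c)`_k in
  i.+1%:R * ((i + b + 1)%:R - c%:R) * u i.+1 = (i%:R - a%:R) * (i%:R - c%:R) * u i.
Proof.
rewrite /= !coef_fpoly; case: (ltngtP i c) => [lt_ic | lt_ci | ->]; last first.
- by rewrite subrr !(mulr0, mul0r).
- by rewrite !mulr0.
have [j ->] : exists j, c = (i.+1 + j)%N by exists (c - i.+1)%N; rewrite subnKC.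
have -> : (i.+1 + j - i = j.+1)%N by lia.
have -> : (i.+1 + j - i.+1 = j)%N by lia.
have binA := natr_mul_bin_left R a i; have binB := natr_mul_bin_left R b j.
rewrite !natrM.
transitivity ((i.+1%:R * 'C(a, i.+1)%:R) * ((b%:R - j%:R) * 'C(b, j)%:R) : R).
  by rewrite !natrD /=; ring.
by rewrite binA -binB !natrD; ring.
Qed.

(* Gauss's hypergeometric operator t(1-t) D^2 + (gamma - (alpha+beta+1) t) D
   - alpha beta, with alpha = -a, beta = -c, gamma = b + 1 - c. *)
Definition hypergeom_op {R : comNzRingType} (a b c : nat) (F : {poly R}) : {poly R} :=
  'X * F^`()^`() - 'X * ('X * F^`()^`()) + ((b + 1)%:R - c%:R : R) *: F^`()
  - (1 - a%:R - c%:R : R) *: ('X * F^`()) - ((a * c)%:R : R) *: F.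

Lemma hypergeom_op_fpoly (R : comNzRingType) a b c :
  hypergeom_op a b c (fpoly R a b c) = 0.
Proof.
apply/polyP => i; rewrite coef0 /hypergeom_op.
have := coef_fpoly_rec R a b c; move: (fpoly R a b c) => F /= rec.
rewrite !(coefB, coefD, coefZ, coefXM, coef_deriv).
case: i => [|[|k]] /=; [move: (rec 0%N) | move: (rec 1%N) | move: (rec k.+2)];
  by move/eqP; rewrite -subr_eq0 => /eqP rec0; rewrite -[RHS]rec0 !natrD !natrM; ring.
Qed.

Lemma hypergeom_op_mul_XsubC_exp (R : comNzRingType) a b c (G : {poly R}) x k :
  let Y := 'X - x%:P in
  exists S, hypergeom_op a b c (G * Y ^+ k.+2)
            = Y ^+ k * (('X - 'X * 'X) * G *+ (k.+2 * k.+1) + Y * S).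
Proof.
move=> Y.
exists (('X - 'X * 'X) * (G^`()^`() * Y + G^`() *+ (2 * k.+2))
  + ((b + 1)%:R - c%:R : R) *: (G^`() * Y + G *+ k.+2)
  - (1 - a%:R - c%:R : R) *: ('X * (G^`() * Y + G *+ k.+2))
  - ((a * c)%:R : R) *: (G * Y)).
have d2 : (Y ^+ k.+2)^`() = Y ^+ k.+1 *+ k.+2 by rewrite deriv_exp derivXsubC mul1r.
have d1 : (Y ^+ k.+1)^`() = Y ^+ k *+ k.+1 by rewrite deriv_exp derivXsubC mul1r.
have e2 : Y ^+ k.+2 = Y ^+ k * Y * Y by rewrite -!exprSr.
have e1 : Y ^+ k.+1 = Y ^+ k * Y by rewrite -!exprSr.
rewrite /hypergeom_op; move: d1 d2 e1 e2; move: (Y ^+ k.+2) (Y ^+ k.+1) => P Q d1 d2 e1 e2.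
rewrite derivM d2 derivD !derivM derivMn d2 d1 e2 e1 -!mul_polyC.
ring.
Qed.

Lemma XsubC_sqr_dvdp (K : idomainType) (F : {poly K}) x :
  F != 0 -> ('X - x%:P) ^+ 2 %| F ->
  exists k G, F = G * ('X - x%:P) ^+ k.+2 /\ ~~ root G x.
Proof.
move=> F_neq0 /(Pdiv.IdomainMonic.dvdpP (monic_exp 2 (monicXsubC x))) [H eqF].
have H_neq0 : H != 0 by apply: contraNneq F_neq0 => H0; rewrite eqF H0 mul0r.
have [k [G]] := multiplicity_XsubC H x; rewrite H_neq0 /= => rootNG eqH.
by exists k, G; split; rewrite // eqF eqH -mulrA -exprD addn2.
Qed.

(* Only the degrees below deg F need to be invertible, which is what makes the
   argument work in characteristic p. *)
Lemma hypergeom_op_root_simple (K : idomainType) a b c (F : {poly K}) x :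
  hypergeom_op a b c F = 0 -> F != 0 -> x != 0 -> x != 1 ->
  (forall m, (0 < m < size F)%N -> m%:R != 0 :> K) ->
  root F x -> simple_root F x.
Proof.
move=> opF F_neq0 x_neq0 x_neq1 natr_neq0 rootF.
rewrite /simple_root rootF /=; apply/negP => /(XsubC_sqr_dvdp F_neq0) [k [G [eqF rootNG]]].
set Y := 'X - x%:P in eqF.
have Y_neq0 : Y != 0 by rewrite polyXsubC_eq0.
have G_neq0 : G != 0 by apply: contraNneq rootNG => ->; rewrite root0.
have lt_k2F : (k.+2 < size F)%N.
  rewrite eqF size_mul ?expf_neq0 // size_exp_XsubC addnS /=.
  by rewrite -[X in (X < _)%N]add0n ltn_add2r size_poly_gt0.
have [S opG] := hypergeom_op_mul_XsubC_exp a b c G x k.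
move: opF; rewrite eqF opG => /eqP; rewrite mulf_eq0 expf_eq0 (negPf Y_neq0) andbF /=.
move=> /eqP/(congr1 (horner^~ x)); rewrite !hornerE subrr mul0r addr0 hornerMn.
rewrite !(hornerM, hornerD, hornerN, hornerX) -mulr_natr natrM; apply/eqP.
rewrite -{1}[x]mulr1 -mulrBr !mulf_neq0 ?natr_neq0 //.
  by rewrite subr_eq0 eq_sym.
by rewrite /= ltnW.
Qed.

Lemma prime_ndvd_fact p n : prime p -> (n < p)%N -> ~~ (p %| n`!)%N.
Proof.
move=> p_pr; elim: n => [_ | n IHn lt_np].
  by rewrite fact0 dvdn1 neq_ltn prime_gt1 ?orbT.
rewrite factS Euclid_dvdM // negb_or IHn 1?ltnW // andbT.
by apply/negP => /dvdn_leq; lia.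
Qed.

Lemma pchar_bin_neq0 (K : nzRingType) p n m :
  prime p -> p \in [pchar K] -> (n < p)%N -> (m <= n)%N -> 'C(n, m)%:R != 0 :> K.
Proof.
move=> p_pr pK lt_np le_mn; rewrite -(dvdn_pcharf pK).
have := prime_ndvd_fact p_pr lt_np; apply: contraNN => p_dvd_bin.
by rewrite -(bin_fact le_mn) dvdn_mulr.
Qed.

Lemma fpoly_neq0 (K : idomainType) p a b c :
  prime p -> p \in [pchar K] -> (a < p)%N -> (b < p)%N -> (c <= a + b)%N ->
  fpoly K a b c != 0.
Proof.
move=> p_pr pK lt_ap lt_bp le_c_ab; apply/eqP => /(congr1 (fun F : {poly K} => F`_(minn c a))).
rewrite coef_fpoly geq_minl coef0 natrM => /eqP; apply/negP.
rewrite mulf_neq0 ?(pchar_bin_neq0 p_pr pK) ?geq_minr // /minn; case: ltnP; lia.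
Qed.

Theorem propositionA6 (p : nat) (K : closedFieldType) (a b c : nat) :
  prime p -> p \in [pchar K] ->
  (a <= p.-1)%N -> (b <= p.-1)%N -> (c <= a + b)%N ->
  forall x : K, x != 0 -> x != 1 -> root (fpoly K a b c) x ->
    simple_root (fpoly K a b c) x.
Proof.
move=> p_pr pK le_a le_b le_c x x_neq0 x_neq1.
have p_gt0 := prime_gt0 p_pr.
have lt_ap : (a < p)%N by lia.
have lt_bp : (b < p)%N by lia.
apply: hypergeom_op_root_simple x_neq0 x_neq1 _.
- exact: hypergeom_op_fpoly.
- exact: fpoly_neq0 p_pr pK lt_ap lt_bp le_c.
move=> m /andP[m_gt0 lt_mF]; rewrite -(dvdn_pcharf pK); apply/negP => /dvdn_leq.
by have := leq_trans lt_mF (size_fpoly K a b c); lia.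
Qed.
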